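(* Consider the classical secretary problem with $n$ candidates: $n$ candidates with distinct ranks arrive one at a time in uniformly random order (all $n!$ orders equally likely); after seeing the $k$-th candidate the decision maker knows only the relative ranks of the first $k$ candidates, must decide immediately and irrevocably whether to stop, and wins if the candidate at which he stops is the overall best. Let $V(n)$ be the maximal win probability over all (non-anticipating) stopping rules. For $k\in\{1,\dots,n\}$ let the threshold rule $\tau_k$ stop at the first candidate with index $j\ge k$ that is relatively best (better than all candidates $1,\dots,j-1$), and stop at candidate $n$ if there is none. Then: (i) $V(n)$ is strictly decreasing in $n$ for $n\ge 3$, i.e. $V(n+1)<V(n)$ for all $n\ge3$; (ii) for every $n\ge 3$ the optimal threshold is unique, i.e. there is exactly one $k\in\{1,\dots,n\}$ for which the win probability of $\tau_k$ is maximal among $\tau_1,\dots,\tau_n$.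
   Context: For $k\ge2$ the win probability of $\tau_k$ equals $\frac{k-1}{n}\sum_{j=k-1}^{n-1}\frac1j$, and that of $\tau_1$ is $1/n$; an optimal threshold rule achieves $V(n)$. *)

From HB Require Import structures.
From mathcomp Require Import all_boot all_order all_algebra all_fingroup.
From mathcomp Require Import boolp classical_sets reals.
Set Implicit Arguments. Unset Strict Implicit. Unset Printing Implicit Defensive.
Import Order.TTheory GRing.Theory Num.Theory.
Local Open Scope ring_scope.
Local Open Scope classical_set_scope.

(* A configuration of the secretary problem with n candidates is a
   permutation s : 'S_n; candidate number j (0-based arrival position,
   i.e. the (j+1)-th to arrive) has absolute rank s j, rank 0 = overall best. *)

Definition relrank (n : nat) (s : 'S_n) (j : 'I_n) : nat :=
  #|[set i : 'I_n | (i < j)%N && (s i < s j)%N]|.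

(* the information available after seeing the first k candidates:
   the relative ranks of candidates 1..k (this determines exactly the
   relative order of the first k candidates) *)
Definition obs (n : nat) (s : 'S_n) (k : nat) : seq nat :=
  map (relrank s) (filter (fun j : 'I_n => (j < k)%N) (enum 'I_n)).

(* A (non-anticipating) stopping rule: after seeing the t-th candidate
   (t = 1..n), decide whether to stop using only t and the observation. *)
Definition rule := nat -> seq nat -> bool.

Definition wins (n : nat) (r : rule) (s : 'S_n) : bool :=
  [exists j : 'I_n,
     [&& r j.+1 (obs s j.+1),
         [forall i : 'I_n, (i < j)%N ==> ~~ r i.+1 (obs s i.+1)]
       & (val (s j) == 0)%N]].

Definition winprob (R : realType) (n : nat) (r : rule) : R :=
  #|[set s : 'S_n | wins r s]|%:R / (n`!)%:R.

Definition V (R : realType) (n : nat) : R :=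
  sup [set winprob R n r | r in [set: rule]].

Definition thr (n k : nat) : rule :=
  fun t o => ((k <= t)%N && (last 0%N o == 0%N)) || (t == n).

From mathcomp Require Import all_boot all_order all_algebra all_fingroup.
From mathcomp Require Import boolp classical_sets reals.
From mathcomp Require Import zify ring.
Import Order.TTheory GRing.Theory Num.Theory.
Set Implicit Arguments. Unset Strict Implicit. Unset Printing Implicit Defensive.

(* Encoding a permutation by its relative ranks c_j <= j makes the observations
   of a stopping rule prefixes of c, and turns the number of winning orders into
   a sum over a tree of prefixes. Backward induction on this tree shows that no
   rule beats the best threshold rule, so V(n) = max_k p_n(k), where
   p_n(k) = (k/n) (1/k + ... + 1/(n-1)) is the win probability of tau_(k+1).
   As p_n(k+1) - p_n(k) = (H - 1)/n with H = 1/(k+1) + ... + 1/(n-1), p_n is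
   unimodal; and H is never 1, because in a sum 1/a + ... + 1/(b-1) of at least
   two terms a single denominator has maximal 2-adic valuation. Hence the
   maximiser is unique, and comparing p_(n+1)(k+1) with p_n(k) when H < 1, or
   with p_n(k+1) when H > 1, gives V(n+1) < V(n). *)

Definition relranks n (s : 'S_n) : seq nat := map (relrank s) (enum 'I_n).

Lemma size_relranks n (s : 'S_n) : size (relranks s) = n.
Proof. by rewrite size_map size_enum_ord. Qed.

Lemma nth_relranks n (s : 'S_n) (j : 'I_n) : nth 0 (relranks s) j = relrank s j.
Proof. by rewrite (nth_map j) ?size_enum_ord // nth_ord_enum. Qed.

Lemma obs_relranks n (s : 'S_n) k : obs s k = take k (relranks s).
Proof.
rewrite /obs /relranks -map_take; congr map; apply: (inj_map val_inj).
rewrite map_take val_enum_ord take_iota.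
have -> : [seq val i | i : 'I_n <- enum 'I_n & i < k] =
          [seq i <- map val (enum 'I_n) | i < k] by rewrite filter_map.
rewrite val_enum_ord -(filter_iota_ltn 0 (geq_minr k n)) add0n.
apply: eq_in_filter => i; rewrite mem_iota add0n => /andP [_ lt_in].
by rewrite leq_min lt_in andbT.
Qed.

(* [relrank] counts the elements of a classical set; this is the finset count. *)
Lemma relrankE n (s : 'S_n) j :
  relrank s j = #|[set i : 'I_n | (i < j) && (s i < s j)]|.
Proof. by apply: eq_card => i; rewrite inE; apply/idP/idP; rewrite in_setE. Qed.

Lemma relrank_gt0P n (s : 'S_n) (j : 'I_n) :
  reflect (exists i : 'I_n, (i < j) && (s i < s j)) (0 < relrank s j).
Proof.
rewrite relrankE; apply: (iffP card_gt0P) => [[i]|[i si_lt]].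
  by rewrite inE; exists i.
by exists i; rewrite inE.
Qed.

Lemma relrank_le n (s : 'S_n) (j : 'I_n) : relrank s j <= j.
Proof.
have le_jn : j <= n := ltnW (ltn_ord j).
have sub : [set i : 'I_n | (i < j) && (s i < s j)] \subset
           [set widen_ord le_jn k | k : 'I_j].
  apply/fintype.subsetP => i; rewrite inE => /andP [lt_ij _].
  by apply/imsetP; exists (Ordinal lt_ij) => //; apply: val_inj.
rewrite relrankE (leq_trans (subset_leq_card sub)) //.
by rewrite (leq_trans (leq_imset_card _ _)) // card_ord.
Qed.

Lemma best_relranks n (s : 'S_n) (j : 'I_n) :
  (val (s j) == 0) =
  (relrank s j == 0) && [forall i : 'I_n, (j < i) ==> (relrank s i != 0)].
Proof.
have s_inj := @perm_inj _ s.
apply/idP/andP => [/eqP sj0 | [/eqP rj0 /forallP later]].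
  split; first by rewrite eqn0Ngt; apply/relrank_gt0P => -[i]; rewrite sj0 andbF.
  apply/forallP => i; apply/implyP => lt_ji; rewrite -lt0n; apply/relrank_gt0P.
  exists j; rewrite lt_ji sj0 lt0n -sj0 val_eqE (inj_eq s_inj).
  by apply: contraTneq lt_ji => ->; rewrite ltnn.
pose zero : 'I_n := Ordinal (leq_ltn_trans (leq0n j) (ltn_ord j)).
pose b := (s^-1)%g zero.
have sb : s b = zero by rewrite permKV.
case: (ltngtP b j) => [lt_bj|lt_jb|/val_inj <-]; last by rewrite sb.
  have /relrank_gt0P : exists i : 'I_n, (i < j) && (s i < s j).
    exists b; rewrite lt_bj sb lt0n -[0]/(val zero) val_eqE -sb.
    by rewrite (inj_eq s_inj); apply: contraTneq lt_bj => ->; rewrite ltnn.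
  by rewrite rj0.
have /implyP/(_ lt_jb) := later b; rewrite -lt0n => /relrank_gt0P [i].
by rewrite sb ltn0 andbF.
Qed.

(* f = t^-1 \o s maps the indices counted by [relrank s j] injectively to
   indices counted by [relrank t j] other than f j, which is counted too. *)
Lemma relrank_lt n (s t : 'S_n) (j : 'I_n) :
  (forall i : 'I_n, j < i -> s i = t i) -> s j < t j -> relrank s j < relrank t j.
Proof.
move=> eq_after lt_st; rewrite !relrankE.
pose f i := (t^-1)%g (s i).
have tf i : t (f i) = s i by rewrite permKV.
have f_inj : injective f by move=> i i' /perm_inj /perm_inj.
clearbody f.
have f_le (i : 'I_n) : i <= j -> f i <= j.
  move=> le_ij; rewrite leqNgt; apply/negP => lt_jfi.
  have /perm_inj fii : s (f i) = s i by rewrite eq_after // tf.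
  by move: lt_jfi; rewrite fii ltnNge le_ij.
have f_lt (i : 'I_n) : i <= j -> s i < t j -> f i < j.
  move=> le_ij lt_sit; rewrite ltn_neqAle f_le // andbT.
  by apply: contraTneq lt_sit => /val_inj <-; rewrite tf ltnn.
have fj_in : f j \in [set i : 'I_n | (i < j) && (t i < t j)].
  by rewrite inE tf lt_st f_lt.
set A := [set i | _]; set B := [set i | _] in fj_in *.
have sub : f @: A \subset B :\ f j.
  apply/fintype.subsetP => x /imsetP [i]; rewrite inE => /andP [lt_ij lt_sij] ->.
  have lt_sit := ltn_trans lt_sij lt_st.
  rewrite !inE (inj_eq f_inj) tf lt_sit (f_lt _ (ltnW lt_ij) lt_sit) !andbT.
  by apply: contraTneq lt_ij => ->; rewrite ltnn.
rewrite (cardsD1 (f j) B) fj_in add1n ltnS -(card_imset A f_inj).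
exact: subset_leq_card sub.
Qed.

Lemma relranks_inj n : injective (@relranks n).
Proof.
move=> s t eq_st.
have eq_rr j : relrank s j = relrank t j by rewrite -!nth_relranks eq_st.
suff eq_from d (j : 'I_n) : n <= j + d -> s j = t j.
  by apply/permP => j; apply: (eq_from n); rewrite leq_addl.
elim: d j => [|d IH] j le_n; first by move: (ltn_ord j); lia.
have later (i : 'I_n) : j < i -> s i = t i by move=> lt_ji; apply: IH; lia.
case: (ltngtP (s j) (t j)) => [lt_st|lt_ts|/val_inj //].
  by have := relrank_lt later lt_st; rewrite eq_rr ltnn.
by have := relrank_lt (fun i h => esym (later i h)) lt_ts; rewrite eq_rr ltnn.
Qed.

(** * Counting winning orders through relative-rank sequences *)

Fixpoint extensions d (p : seq nat) : seq (seq nat) :=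
  if d is d'.+1 then flatten [seq extensions d' (rcons p v) | v <- iota 0 (size p).+1]
  else [:: p].

Lemma extensionsP d p c :
  reflect [/\ size c = size p + d, take (size p) c = p &
             forall i, size p <= i < size c -> nth 0 c i <= i]
          (c \in extensions d p).
Proof.
elim: d p => [|d IH] p.
  rewrite inE addn0; apply: (iffP eqP) => [->|[size_c take_c _]].
    by split=> // [|i]; [rewrite take_size | lia].
  by rewrite -take_c -size_c take_size.
apply: (iffP flatten_mapP) => [[v] | [size_c take_c le_c]].
  rewrite mem_iota => /andP [_ le_v] /IH [].
  rewrite size_rcons => size_c take_c le_c.
  have lt_pc : size p < size c by lia.
  split=> [||i /andP [le_pi lt_ic]]; first lia.
    by rewrite -(take_takel _ (leqnSn _)) take_c -cats1 take_size_cat.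
  case: (ltngtP i (size p)) => [|lt_pi|->]; [lia | by apply: le_c; lia |].
  by rewrite -(nth_take 0 (ltnSn _)) take_c nth_rcons ltnn eqxx.
have lt_pc : size p < size c by lia.
exists (nth 0 c (size p)); first by rewrite mem_iota ltnS le_c ?leqnn.
apply/IH; rewrite size_rcons (take_nth 0 lt_pc) take_c.
by split=> // [|i /andP [lt_pi lt_ic]]; [lia | apply: le_c; lia].
Qed.

Lemma size_extensions d p :
  size (extensions d p) = \prod_(size p <= i < size p + d) i.+1.
Proof.
elim: d p => [|d IH] p; first by rewrite addn0 big_geq.
rewrite size_flatten /shape -map_comp sumnE big_map.
under eq_bigr do rewrite /= IH size_rcons.
rewrite big_const_seq count_predT size_iota iter_addn_0 mulnC addnS.
by rewrite [RHS]big_ltn ?addSn // ltnS leq_addr.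
Qed.

Lemma mem_extensions_rcons d q v c : c \in extensions d (rcons q v) ->
  [/\ take (size q).+1 c = rcons q v, nth 0 c (size q) = v
    & drop (size q) c = v :: drop (size q).+1 c].
Proof.
case/extensionsP; rewrite size_rcons => size_c take_c _.
have lt_qc : size q < size c by rewrite size_c addSn ltnS leq_addr.
have cq : nth 0 c (size q) = v.
  by rewrite -(nth_take 0 (ltnSn _)) take_c nth_rcons ltnn eqxx.
by split=> //; rewrite (drop_nth 0 lt_qc) cq.
Qed.

Lemma relranks_extensions n (s : 'S_n) : relranks s \in extensions n [::].
Proof.
apply/extensionsP; split=> [||i]; rewrite ?size_relranks ?take0 // => /= lt_in.
by rewrite -[i]/(val (Ordinal lt_in)) nth_relranks relrank_le.
Qed.

Lemma perm_relranks_extensions n :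
  perm_eq (map (@relranks n) (enum 'S_n)) (extensions n [::]).
Proof.
have uniq_rr : uniq (map (@relranks n) (enum 'S_n)).
  by rewrite (map_inj_uniq (@relranks_inj n)) enum_uniq.
have sub : {subset map (@relranks n) (enum 'S_n) <= extensions n [::]}.
  by move=> c /mapP [s _ ->]; apply: relranks_extensions.
have le_size : size (extensions n [::]) <= size (map (@relranks n) (enum 'S_n)).
  by rewrite size_extensions size_map -cardE card_Sn fact_prod big_add1.
apply: uniq_perm => //; first exact: leq_size_uniq uniq_rr sub le_size.
by have [] := uniq_min_size uniq_rr sub le_size.
Qed.

Lemma count_nonzero_tails d q :
  \sum_(c <- extensions d q) (all (fun x => x != 0) (drop (size q) c) : nat) =
  \prod_(size q <= i < size q + d) i.
Proof.
elim: d q => [|d IH] q; first by rewrite big_seq1 drop_size addn0 big_geq.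
set P := \prod_((size q).+1 <= i < (size q).+1 + d) i.
have branch v :
    \sum_(c <- extensions d (rcons q v)) (all (fun x => x != 0) (drop (size q) c) : nat)
    = (v != 0) * P.
  rewrite /P -(size_rcons q v) -IH big_distrr /= big_seq [RHS]big_seq.
  by apply: eq_bigr => c /mem_extensions_rcons [_ _ ->]; rewrite size_rcons /= mulnb.
rewrite big_flatten big_map (eq_bigr _ (fun v _ => branch v)) /= big_cons mul0n add0n.
rewrite big_seq (eq_bigr (fun=> P)) => [|v]; last first.
  by rewrite mem_iota => /andP [v_gt0 _]; rewrite -lt0n v_gt0 mul1n.
rewrite -big_seq big_const_seq count_predT size_iota iter_addn_0 mulnC addnS.
by rewrite [RHS]big_ltn ?addSn // ltnS leq_addr.
Qed.

Fixpoint wins_from (r : rule) d m (c : seq nat) : bool :=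
  if d is d'.+1 then
    if r m.+1 (take m.+1 c)
    then (nth 0 c m == 0) && all (fun x => x != 0) (drop m.+1 c)
    else wins_from r d' m.+1 c
  else false.

Definition nwins r d p := \sum_(c <- extensions d p) (wins_from r d (size p) c : nat).

Lemma all_nonzero_drop_relranks n (s : 'S_n) (j : 'I_n) :
  all (fun x => x != 0) (drop j.+1 (relranks s)) =
  [forall i : 'I_n, (j < i) ==> (relrank s i != 0)].
Proof.
apply/(all_nthP 0)/forallP => [nz i | nz k].
  apply/implyP => lt_ji; have := nz (i - j.+1).
  rewrite size_drop size_relranks nth_drop subnKC // -nth_relranks; apply.
  by move: (ltn_ord i); lia.
rewrite size_drop size_relranks nth_drop => lt_k.
have lt_jk : j.+1 + k < n by lia.
by have /implyP := nz (Ordinal lt_jk); rewrite -nth_relranks /=; apply; lia.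
Qed.

Lemma wins_from_relranks n r (s : 'S_n) d m : m + d = n ->
  wins_from r d m (relranks s) =
  [exists j : 'I_n, [&& m <= j, r j.+1 (obs s j.+1),
     [forall i : 'I_n, (m <= i < j) ==> ~~ r i.+1 (obs s i.+1)] & val (s j) == 0]].
Proof.
elim: d m => [|d IH] m def_n.
  by apply/esym/existsP => -[j /and4P [le_mj _ _ _]]; move: (ltn_ord j); lia.
have lt_mn : m < n by lia.
pose jm : 'I_n := Ordinal lt_mn.
rewrite /= -obs_relranks; case: ifP => stop_m.
  have rr_m : nth 0 (relranks s) m = relrank s jm by rewrite -nth_relranks.
  rewrite rr_m (all_nonzero_drop_relranks s jm) -best_relranks.
  apply/idP/existsP => [best_m | [j /and4P [le_mj stop_j /forallP before_j best_j]]].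
    exists jm; apply/and4P; split; [exact: leqnn | exact: stop_m | | exact: best_m].
    apply/forallP => i; apply/implyP => /andP [le_mi lt_im].
    by move: (leq_trans lt_im le_mi); rewrite ltnn.
  case: (ltngtP m j) => [lt_mj | lt_jm | eq_mj].
  - by have /implyP := before_j jm; rewrite /= leqnn lt_mj stop_m => /(_ isT).
  - by move: le_mj; rewrite leqNgt lt_jm.
  - by rewrite (_ : jm = j) //; apply: val_inj.
rewrite IH; last lia.
apply/existsP/existsP => -[j /and4P [le_mj stop_j /forallP before_j best_j]]; exists j.
  rewrite ltnW // stop_j best_j andbT; apply/forallP => i.
  apply/implyP => /andP [le_mi lt_ij].
  case: (ltngtP m i) => [lt_mi | | eq_mi]; [| lia | by rewrite -eq_mi stop_m].
  by have /implyP := before_j i; apply; rewrite lt_mi lt_ij.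
have lt_mj : m < j.
  by rewrite ltn_neqAle le_mj andbT; apply: contraFneq stop_m => ->.
rewrite lt_mj stop_j best_j andbT; apply/forallP => i.
by apply/implyP => /andP [lt_mi lt_ij]; have /implyP := before_j i; apply; rewrite ltnW.
Qed.

Lemma wins_relranks n r (s : 'S_n) : wins r s = wins_from r n 0 (relranks s).
Proof. by rewrite wins_from_relranks. Qed.

Lemma card_wins n r : #|[set s : 'S_n | wins r s]| = nwins r n [::].
Proof.
rewrite /nwins -(perm_big _ (perm_relranks_extensions n)) big_map.
rewrite -sum1_card big_mkcond -big_enum /=; apply: eq_bigr => s _.
by rewrite inE wins_relranks; case: (wins_from _ _ _ _).
Qed.

Lemma nwinsS r d p : nwins r d.+1 p =
  \sum_(v <- iota 0 (size p).+1)
     (if r (size p).+1 (rcons p v)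
      then (v == 0) * \prod_((size p).+1 <= i < (size p).+1 + d) i
      else nwins r d (rcons p v)).
Proof.
rewrite /nwins [extensions d.+1 p]/extensions -/extensions big_flatten big_map.
apply: eq_bigr => v _.
case: ifP => stop_v.
  rewrite -(size_rcons p v) -count_nonzero_tails big_distrr /= big_seq [RHS]big_seq.
  apply: eq_bigr => c /mem_extensions_rcons [take_c cp _].
  by rewrite /= take_c stop_v cp size_rcons mulnb.
rewrite big_seq [RHS]big_seq size_rcons.
by apply: eq_bigr => c /mem_extensions_rcons [take_c _ _]; rewrite /= take_c stop_v.
Qed.

Definition ntails n m := \prod_(m <= i < n) i.+1.

Lemma ntails_rec n m : m < n -> ntails n m = m.+1 * ntails n m.+1.
Proof. by move=> lt_mn; rewrite /ntails big_ltn. Qed.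

Lemma ntails0 n : ntails n 0 = n`!.
Proof. by rewrite /ntails fact_prod big_add1. Qed.

Lemma prod_tail_ntails n m : m < n -> (\prod_(m.+1 <= i < n) i) * n = ntails n m.
Proof. by case: n => // n lt_mn; rewrite /ntails big_add1 /= big_nat_recr. Qed.

Lemma thr_rcons n k t p v : thr n k t (rcons p v) = (k <= t)%N && (v == 0)%N || (t == n).
Proof. by rewrite /thr last_rcons. Qed.

(** * Sums of reciprocals of consecutive integers *)

Lemma max_pow2_dvd_unique a b : 0 < a -> a.+1 < b ->
  exists v j, [/\ 0 < v, a <= j < b, 2 ^ v %| j &
                  forall i, a <= i < b -> 2 ^ v %| i -> i = j].
Proof.
move=> a_gt0 lt_a1b.
pose P v := has (fun j => 2 ^ v %| j) (index_iota a b).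
have PP v : reflect (exists2 j, a <= j < b & 2 ^ v %| j) (P v).
  apply: (iffP hasP) => -[j]; rewrite ?mem_index_iota => j_in dvd_j.
    by exists j.
  by exists j; rewrite ?mem_index_iota.
have P1 : P 1.
  apply/PP; exists (a + odd a); first by rewrite leq_addr /=; case: (odd a); lia.
  by rewrite expn1 dvdn2 oddD oddb addbb.
have P_bounded v : P v -> v <= b.
  case/PP => j /andP [le_aj lt_jb] /(dvdn_leq (leq_trans a_gt0 le_aj)) le_pow.
  by have := ltn_expl v (ltnSn 1); lia.
have [v /PP [j j_in dvd_j] v_max] := ex_maxnP (ex_intro _ 1 P1) P_bounded.
exists v, j; split=> //; first exact: v_max P1.
suff no_two x y : a <= x < b -> a <= y < b -> 2 ^ v %| x -> 2 ^ v %| y -> x < y -> False.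
  move=> i i_in dvd_i; case: (ltngtP i j) => // [lt_ij | lt_ji].
    by case: (no_two i j).
  by case: (no_two j i).
(* Between two multiples of 2^v lies a multiple of 2^v.+1. *)
move=> /andP [le_ax _] /andP [_ lt_yb] /dvdnP [x' def_x] /dvdnP [y' def_y] lt_xy.
subst x y.
have lt_x'y' : x' < y' by rewrite -(ltn_pmul2r (expn_gt0 2 v)).
suff /v_max : P v.+1 by rewrite ltnn.
apply/PP.
exists ((x' + odd x') * 2 ^ v).
  have le_x'z : x' <= x' + odd x' <= y' by rewrite leq_addr /=; case: (odd x'); lia.
  case/andP: le_x'z => le1 le2; apply/andP; split.
    by apply: leq_trans le_ax _; rewrite leq_mul2r le1 orbT.
  by apply: leq_ltn_trans lt_yb; rewrite leq_mul2r le2 orbT.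
by rewrite expnS dvdn_pmul2r ?expn_gt0 // dvdn2 oddD oddb addbb.
Qed.

Lemma sum_prod_but_one_neq a b m : 0 < a -> a.+1 < b ->
  \sum_(a <= j < b) \prod_(a <= i < b | i != j) i != m * \prod_(a <= i < b) i.
Proof.
move=> a_gt0 lt_a1b.
have [v [j [v_gt0 j_in dvd_j uniq_j]]] := max_pow2_dvd_unique a_gt0 lt_a1b.
set L := \prod_(a <= i < b) i; pose T i := \prod_(a <= k < b | k != i) k.
have L_T i : a <= i < b -> L = i * T i.
  by move=> i_in; rewrite /L (bigD1_seq i) ?mem_index_iota ?iota_uniq.
have L_gt0 : 0 < L.
  by rewrite /L big_seq prodn_cond_gt0 // => i; rewrite mem_index_iota; lia.
have T_gt0 i : a <= i < b -> 0 < T i.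
  by move=> i_in; move: L_gt0; rewrite (L_T i i_in) muln_gt0 => /andP [].
have logL i : a <= i < b -> logn 2 L = logn 2 i + logn 2 (T i).
  by move=> i_in; rewrite (L_T i i_in) lognM ?T_gt0 //; lia.
have le_vj : v <= logn 2 j by rewrite -pfactor_dvdn //; lia.
have le_vL : v <= logn 2 L by rewrite (logL j j_in) (leq_trans le_vj) ?leq_addr.
(* 2^K divides m * L and every T i with i != j, but not T j: as j has the
   largest 2-adic valuation, T j has the smallest. *)
pose K := (logn 2 L - v).+1.
have K_L : 2 ^ K %| m * L.
  by apply: dvdn_mull; rewrite pfactor_dvdn // /K; lia.
have K_T i : a <= i < b -> i != j -> 2 ^ K %| T i.
  move=> i_in ne_ij; rewrite pfactor_dvdn ?T_gt0 //.
  have : logn 2 i < v.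
    rewrite ltnNge -pfactor_dvdn //; last lia.
    by apply: contra ne_ij => /(uniq_j i i_in) ->.
  by rewrite /K; have := logL i i_in; lia.
have nK_Tj : ~~ (2 ^ K %| T j).
  by rewrite pfactor_dvdn ?T_gt0 // /K -ltnNge; have := logL j j_in; lia.
apply: contra nK_Tj => /eqP sum_eq; move: K_L.
rewrite -sum_eq (bigD1_seq j) ?mem_index_iota ?iota_uniq //= dvdn_addl //.
rewrite big_seq_cond; apply: dvdn_sum => i /andP [i_in ne_ij].
by apply: K_T; rewrite // -mem_index_iota.
Qed.

Local Open Scope ring_scope.

Section ThresholdValues.
Variable R : realFieldType.
Implicit Types (a b j k m n : nat).

Definition harm a b : R := \sum_(a <= j < b) j%:R^-1.

(* [pwin n k] is the win probability of [thr n k.+1] (see [winprob_thr]);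
   [thr n 1] stops at once, hence the separate case k = 0. *)
Definition pwin n k : R := if k == 0%N then n%:R^-1 else k%:R / n%:R * harm k n.

Definition best_pwin n m : R := \big[Num.max/0]_(m <= k < n) pwin n k.

Lemma harm_ltn a b : (a < b)%N -> harm a b = a%:R^-1 + harm a.+1 b.
Proof. by move=> lt_ab; rewrite /harm big_ltn. Qed.

Lemma harm_geq a b : (b <= a)%N -> harm a b = 0.
Proof. by move=> le_ba; rewrite /harm big_geq. Qed.

Lemma harmSr a b : (a <= b)%N -> harm a b.+1 = harm a b + b%:R^-1.
Proof. by move=> le_ab; rewrite /harm big_nat_recr. Qed.

Lemma harm_ge0 a b : 0 <= harm a b.
Proof. by apply: sumr_ge0 => j _; rewrite invr_ge0 ler0n. Qed.

Lemma le_harm a a' b : (a <= a')%N -> harm a' b <= harm a b.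
Proof.
move=> le_aa'; have [le_ba'|lt_a'b] := leqP b a'; first by rewrite harm_geq ?harm_ge0.
by rewrite /harm (big_cat_nat le_aa' (ltnW lt_a'b)) lerDr; apply: harm_ge0.
Qed.

Lemma pwin_nn n : pwin n n = 0.
Proof. by rewrite /pwin; case: eqP => [->|_]; rewrite ?invr0 // harm_geq ?mulr0. Qed.

Lemma pwin_ge0 n k : 0 <= pwin n k.
Proof.
rewrite /pwin; case: eqP => _; first by rewrite invr_ge0 ler0n.
by rewrite mulr_ge0 ?divr_ge0 ?ler0n ?harm_ge0.
Qed.

Lemma pwinSB n j : (j < n)%N -> pwin n j.+1 - pwin n j = (harm j.+1 n - 1) / n%:R.
Proof.
move=> lt_jn; rewrite /pwin /=; case: eqP => [->|/eqP j_neq0].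
  by rewrite mul1r mulrBl mul1r mulrC.
have n_neq0 : n%:R != 0 :> R by rewrite pnatr_eq0 -lt0n (leq_ltn_trans _ lt_jn).
have j_neq0' : j%:R != 0 :> R by rewrite pnatr_eq0.
rewrite (harm_ltn lt_jn) -addn1 natrD; field; exact/andP.
Qed.

Lemma pwin_rec n m : (m < n)%N ->
  pwin n m = n%:R^-1 + m%:R / m.+1%:R * pwin n m.+1.
Proof.
move=> lt_mn; rewrite {1}/pwin; case: eqP => [->|/eqP m_neq0].
  by rewrite mul0r mul0r addr0.
have n_neq0 : n%:R != 0 :> R by rewrite pnatr_eq0 -lt0n (leq_ltn_trans _ lt_mn).
have m_neq0' : m%:R != 0 :> R by rewrite pnatr_eq0.
have m1_neq0 : 1 + m%:R != 0 :> R by rewrite addrC natr1 pnatr_eq0.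
by rewrite /pwin /= (harm_ltn lt_mn); field; rewrite n_neq0 m_neq0' m1_neq0.
Qed.

Lemma pwin_nonincr n k j : harm k.+1 n <= 1 -> (k <= j <= n)%N ->
  pwin n j <= pwin n k.
Proof.
move=> harm_le1 /andP [le_kj le_jn].
pose D := [pred i | k <= i <= n]%N.
have D_conv : {in D &, forall a b c, (a < c < b)%N -> c \in D}.
  by move=> a b; rewrite !inE /= => aD bD c acb; rewrite inE /=; lia.
have step : {in D, forall i, i.+1 \in D -> pwin n i.+1 <= pwin n i}.
  move=> i; rewrite !inE => /andP [le_ki _] /andP [_ lt_in].
  rewrite -subr_le0 (pwinSB lt_in) mulr_le0_ge0 ?invr_ge0 ?ler0n // subr_le0.
  exact: le_trans (le_harm _ _) harm_le1.
apply: (homo_leq_in (r := fun x y : R => y <= x) (@lexx _ _)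
  (fun _ _ _ yx zy => le_trans zy yx) D_conv step) => //; rewrite inE /=; lia.
Qed.

Lemma pwin_decr n k j : harm k.+1 n < 1 -> (k < j <= n)%N -> pwin n j < pwin n k.
Proof.
move=> harm_lt1 /andP [lt_kj le_jn].
pose D := [pred i | k <= i <= n]%N.
have D_conv : {in D &, forall a b c, (a < c < b)%N -> c \in D}.
  by move=> a b; rewrite !inE /= => aD bD c acb; rewrite inE /=; lia.
have step : {in D, forall i, i.+1 \in D -> pwin n i.+1 < pwin n i}.
  move=> i; rewrite !inE => /andP [le_ki _] /andP [_ lt_in].
  rewrite -subr_lt0 (pwinSB lt_in) pmulr_llt0 ?invr_gt0 ?ltr0n ?subr_lt0 //; last lia.
  exact: le_lt_trans (le_harm _ _) harm_lt1.
apply: (homo_ltn_in (r := fun x y : R => y < x)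
  (fun _ _ _ yx zy => lt_trans zy yx) D_conv step) => //; rewrite inE /=; lia.
Qed.

Lemma best_pwin_rec n m : (m < n)%N ->
  best_pwin n m = Num.max (pwin n m) (best_pwin n m.+1).
Proof. by move=> lt_mn; rewrite /best_pwin big_ltn. Qed.

Lemma best_pwin_ge0 n m : 0 <= best_pwin n m.
Proof.
by apply: (big_rec (fun x => 0 <= x)) => // k x _ x_ge0; rewrite le_max x_ge0 orbT.
Qed.

Lemma pwin_le_best n m k : (m <= k <= n)%N -> pwin n k <= best_pwin n m.
Proof.
case/andP => le_mk; rewrite leq_eqVlt => /predU1P [->|lt_kn].
  by rewrite pwin_nn best_pwin_ge0.
by apply: le_bigmax_seq; rewrite // mem_index_iota le_mk.
Qed.

Lemma best_pwin_attained n m : (m < n)%N ->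
  exists2 k, (m <= k < n)%N & best_pwin n m = pwin n k.
Proof.
move=> lt_mn; have -> : best_pwin n m = \big[Num.max/0]_(i < n - m) pwin n (i + m).
  by rewrite /best_pwin -{1}(add0n m) big_addn big_mkord.
have i0 : 'I_(n - m) by exists 0%N; rewrite subn_gt0.
rewrite (bigmax_eq_arg _ i0) // => [|i _]; last exact: pwin_ge0.
set i := [arg max_(i > i0) _]%O; exists (i + m)%N => //.
by move: (ltn_ord i); rewrite leq_addl /=; lia.
Qed.

(* One step of backward induction: the (m+1)-th candidate is relatively best in
   one case out of m+1, and stopping there wins with probability (m+1)/n. *)
Lemma best_pwin_bellman n m : (m < n)%N ->
  Num.max (m.+1%:R / n%:R) (best_pwin n m.+1) + m%:R * best_pwin n m.+1
    <= m.+1%:R * best_pwin n m.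
Proof.
move=> lt_mn; rewrite [best_pwin n m]best_pwin_rec //; set w' := best_pwin n m.+1.
have n_gt0 : 0 < n%:R :> R by rewrite ltr0n (leq_ltn_trans _ lt_mn).
have [stop_le|w'_lt] := leP (m.+1%:R / n%:R) w'.
  rewrite -[X in X + _]mul1r -mulrDl addrC natr1 ler_wpM2l //.
  by rewrite le_max lexx orbT.
have pwin1_le : pwin n m.+1 <= w' by apply: pwin_le_best; rewrite leqnn.
have harm_lt1 : harm m.+1 n < 1.
  rewrite ltNge; apply: contraTN w'_lt => harm_ge1; rewrite -leNgt.
  apply: le_trans pwin1_le; rewrite /pwin /= -[leLHS]mulr1 ler_wpM2l //.
  by rewrite divr_ge0 ?ler0n ?ltW.
have w'_le : w' <= pwin n m.+1.
  rewrite /w' /best_pwin big_seq; apply: bigmax_le => [|k]; first exact: pwin_ge0.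
  rewrite mem_index_iota => /andP [le_m1k lt_kn]; apply: pwin_nonincr.
    exact: le_trans (le_harm _ _) (ltW harm_lt1).
  by rewrite le_m1k ltnW.
apply: le_trans (_ : m.+1%:R * pwin n m <= _); last by rewrite ler_wpM2l // le_max lexx.
have -> : m.+1%:R * pwin n m = m.+1%:R / n%:R + m%:R * pwin n m.+1.
  by rewrite (pwin_rec lt_mn); field; rewrite (gt_eqF n_gt0) addrC natr1 pnatr_eq0.
by rewrite lerD ?ler_wpM2l // ge_max lexx ltW.
Qed.

End ThresholdValues.

Lemma harm_neq_natr (R : realFieldType) a b m : (0 < a)%N -> (a.+1 < b)%N ->
  harm R a b != m%:R.
Proof.
move=> a_gt0 lt_a1b; apply/eqP => harm_m.
have /eqP := sum_prod_but_one_neq m a_gt0 lt_a1b; apply; apply/eqP.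
rewrite -(eqr_nat R) natr_sum natrM -harm_m /harm mulr_suml; apply/eqP.
apply: eq_big_seq => j; rewrite mem_index_iota => j_in.
have j_neq0 : j%:R != 0 :> R by rewrite pnatr_eq0; lia.
by rewrite [in RHS](bigD1_seq j) ?mem_index_iota ?iota_uniq //= natrM mulrA mulVf ?mul1r.
Qed.

Lemma harm_neq1 (R : realFieldType) k n : (0 < k)%N -> (2 < n)%N -> harm R k n != 1.
Proof.
move=> k_gt0 n_gt2; case: (ltngtP k.+1 n) => [lt_k1n | lt_nk1 | eq_k1n].
- exact: (harm_neq_natr _ 1).
- by rewrite harm_geq // eq_sym oner_eq0.
- rewrite -eq_k1n (harm_ltn _ (ltnSn k)) harm_geq // addr0 invr_eq1 pnatr_eq1.
  by move: n_gt2; rewrite -eq_k1n; case: k k_gt0 {eq_k1n} => [|[]].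
Qed.

(** * Optimality of threshold rules *)

Lemma sum_iota0_le (V : numDomainType) (F : nat -> V) B m :
  (forall v, (0 < v)%N -> F v <= B) -> \sum_(v <- iota 0 m.+1) F v <= F 0%N + B *+ m.
Proof.
move=> le_FB; rewrite big_cons lerD2l.
apply: le_trans (_ : \sum_(v <- iota 1 m) B <= _).
  by rewrite big_seq [leRHS]big_seq; apply: ler_sum => v /[!mem_iota] /andP [/le_FB].
by rewrite big_const_seq count_predT size_iota iter_addr_0.
Qed.

Lemma sum_iota0_eq (V : nmodType) (F : nat -> V) B m :
  (forall v, (0 < v)%N -> F v = B) -> \sum_(v <- iota 0 m.+1) F v = F 0%N + B *+ m.
Proof.
move=> eq_FB; rewrite big_cons (eq_big_seq (fun=> B)) => [|v]; last first.
  by rewrite mem_iota => /andP [/eq_FB].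
by rewrite big_const_seq count_predT size_iota iter_addr_0.
Qed.

Section Counting.
Variables (R : realFieldType) (n : nat).

Lemma natr_prod_tail m : (m < n)%N ->
  (\prod_(m.+1 <= i < n) i)%:R = (ntails n m.+1)%:R * (m.+1%:R / n%:R) :> R.
Proof.
move=> lt_mn.
have n_neq0 : n%:R != 0 :> R by rewrite pnatr_eq0 -lt0n (leq_ltn_trans _ lt_mn).
apply: (mulIf n_neq0); rewrite -natrM prod_tail_ntails // ntails_rec // natrM.
by rewrite mulrC -!mulrA mulVf // mulr1 mulrC.
Qed.

Lemma nwins_le_best r d p : (size p + d)%N = n ->
  (nwins r d p)%:R <= (ntails n (size p))%:R * best_pwin R n (size p).
Proof.
elim: d p => [|d IH] p def_n.
  by rewrite /nwins big_seq1 /= mulr_ge0 ?ler0n ?best_pwin_ge0.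
set m := size p; have lt_mn : (m < n)%N by rewrite -def_n addnS ltnS leq_addr.
set N' : R := (ntails n m.+1)%:R; set w' := best_pwin R n m.+1.
have N'_ge0 : 0 <= N' by rewrite ler0n.
have IH' v : (nwins r d (rcons p v))%:R <= N' * w'.
  by have := IH (rcons p v); rewrite size_rcons; apply; rewrite addSnnS.
rewrite nwinsS natr_sum -/m.
apply: le_trans (sum_iota0_le (B := N' * w') _ _) _ => [v v_gt0|].
  case: ifP => _; last exact: IH'.
  by rewrite eqn0Ngt v_gt0 mul0n mulr_ge0 ?best_pwin_ge0.
apply: le_trans (lerD (_ : _ <= N' * Num.max (m.+1%:R / n%:R) w') (lexx _)) _.
  case: ifP => _.
    by rewrite mul1n addSnnS def_n natr_prod_tail // ler_wpM2l // le_max lexx.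
  by rewrite (le_trans (IH' 0%N)) // ler_wpM2l // le_max lexx orbT.
rewrite -mulrnAr -mulrDr (ntails_rec lt_mn) natrM -/N' -mulrA [leRHS]mulrCA.
rewrite ler_wpM2l // -[w' *+ m]mulr_natl.
exact: best_pwin_bellman.
Qed.

Lemma nwins_thr k d p : (k < n)%N -> (size p + d)%N = n ->
  (nwins (thr n k.+1) d p)%:R = (ntails n (size p))%:R * pwin R n (maxn (size p) k).
Proof.
move=> lt_kn; elim: d p => [|d IH] p def_n.
  rewrite /nwins big_seq1 /=; move: def_n; rewrite addn0 => ->.
  by rewrite (maxn_idPl (ltnW lt_kn)) pwin_nn mulr0.
set m := size p; have lt_mn : (m < n)%N by rewrite -def_n addnS ltnS leq_addr.
set N' : R := (ntails n m.+1)%:R.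
have n_neq0 : n%:R != 0 :> R by rewrite pnatr_eq0 -lt0n (leq_ltn_trans _ lt_mn).
have IH' v : (nwins (thr n k.+1) d (rcons p v))%:R = N' * pwin R n (maxn m.+1 k).
  by have := IH (rcons p v); rewrite size_rcons; apply; rewrite addSnnS.
rewrite nwinsS natr_sum -/m; under eq_bigr do rewrite thr_rcons.
rewrite (ntails_rec lt_mn) natrM -/N'.
have [le_km|lt_mk] := leqP k m.
  rewrite (sum_iota0_eq (B := N' * pwin R n m.+1)) => [|v v_gt0]; last first.
    rewrite eqn0Ngt v_gt0 andbF /=; case: eqP => [<-|_].
      by rewrite mul0n pwin_nn mulr0.
    by rewrite IH' (maxn_idPl (leqW le_km)).
  rewrite ltnS le_km eqxx /= mul1n addSnnS def_n natr_prod_tail //.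
  rewrite (pwin_rec _ lt_mn) -mulr_natl.
  by field; rewrite n_neq0 addrC natr1 pnatr_eq0.
have m1_neq_n : (m.+1 == n) = false.
  by apply/negbTE; rewrite neq_ltn (leq_ltn_trans lt_mk lt_kn).
rewrite (sum_iota0_eq (B := N' * pwin R n k)) => [|v _]; last first.
  by rewrite ltnS leqNgt lt_mk m1_neq_n IH' (maxn_idPr lt_mk).
rewrite ltnS leqNgt lt_mk m1_neq_n /= IH' (maxn_idPr lt_mk).
by rewrite -mulr_natl -natr1; ring.
Qed.

End Counting.

Section Unimodality.
Variable R : realFieldType.

Lemma pwin_lt_argmax n a b : (2 < n)%N -> (a < b)%N -> (b <= n)%N ->
  (forall j, (j <= n)%N -> pwin R n j <= pwin R n a) -> pwin R n b < pwin R n a.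
Proof.
move=> n_gt2 lt_ab le_bn a_max.
have lt_an : (a < n)%N := leq_trans lt_ab le_bn.
have harm_le1 : harm R a.+1 n <= 1.
  have := a_max a.+1 lt_an; rewrite -subr_le0 (pwinSB _ lt_an).
  by rewrite pmulr_lle0 ?invr_gt0 ?ltr0n ?subr_le0 //; lia.
apply: pwin_decr; last by rewrite lt_ab.
by rewrite lt_neqAle harm_le1 harm_neq1.
Qed.

Lemma pwin_argmax_unique n a b : (2 < n)%N -> (a <= n)%N -> (b <= n)%N ->
  (forall j, (j <= n)%N -> pwin R n j <= pwin R n a) ->
  pwin R n b = pwin R n a -> b = a.
Proof.
move=> n_gt2 le_an le_bn a_max eq_ba.
have b_max j : (j <= n)%N -> pwin R n j <= pwin R n b by rewrite eq_ba; apply: a_max.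
case: (ltngtP a b) => [lt_ab | lt_ba | //].
  by have := pwin_lt_argmax n_gt2 lt_ab le_bn a_max; rewrite eq_ba ltxx.
by have := pwin_lt_argmax n_gt2 lt_ba le_an b_max; rewrite eq_ba ltxx.
Qed.

Lemma pwinSS n k : (k < n)%N ->
  pwin R n.+1 k.+1 = k.+1%:R / n.+1%:R * (harm R k.+1 n + n%:R^-1).
Proof. by move=> lt_kn; rewrite /pwin /= harmSr. Qed.

Lemma pwin_subSS n k : (k < n)%N ->
  pwin R n k - pwin R n.+1 k.+1 =
  (n%:R - k%:R) * (1 - harm R k.+1 n) / (n%:R * n.+1%:R).
Proof.
move=> lt_kn; rewrite pwinSS //.
have n_neq0 : n%:R != 0 :> R by rewrite pnatr_eq0; lia.
have n1_neq0 : 1 + n%:R != 0 :> R by rewrite addrC natr1 pnatr_eq0.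
rewrite {1}/pwin; case: eqP => [->|/eqP k_neq0].
  by field; rewrite n1_neq0 n_neq0.
have k_neq0' : k%:R != 0 :> R by rewrite pnatr_eq0.
by rewrite (harm_ltn _ lt_kn); field; rewrite ?n_neq0 ?n1_neq0 ?k_neq0'.
Qed.

Lemma pwinS_subSS n k : (k < n)%N ->
  pwin R n k.+1 - pwin R n.+1 k.+1 =
  k.+1%:R * (harm R k.+1 n - 1) / (n%:R * n.+1%:R).
Proof.
move=> lt_kn; rewrite pwinSS //.
have n_neq0 : n%:R != 0 :> R by rewrite pnatr_eq0; lia.
have n1_neq0 : 1 + n%:R != 0 :> R by rewrite addrC natr1 pnatr_eq0.
by rewrite /pwin /=; field; rewrite ?n_neq0 ?n1_neq0.
Qed.

Lemma pwin_succ_lt_best n k : (2 < n)%N -> (k <= n)%N ->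
  pwin R n.+1 k < best_pwin R n 0.
Proof.
move=> n_gt2 le_kn.
have best_ge j : (j <= n)%N -> pwin R n j <= best_pwin R n 0.
  by move=> le_jn; apply: pwin_le_best.
have den_gt0 : 0 < n%:R * n.+1%:R :> R by rewrite mulr_gt0 ?ltr0n //; lia.
case: k le_kn => [_ | k lt_kn].
  apply: lt_le_trans (best_ge 0%N (leq0n n)).
  by rewrite /pwin /= ltf_pV2 ?posrE ?ltr0n ?ltr_nat //; lia.
have := harm_neq1 R (ltn0Sn k) n_gt2; rewrite neq_lt => /orP [harm_lt1 | harm_gt1].
  apply: lt_le_trans (best_ge k (ltnW lt_kn)).
  rewrite -subr_gt0 pwin_subSS // divr_gt0 // mulr_gt0 ?subr_gt0 ?ltr_nat //.
apply: lt_le_trans (best_ge k.+1 lt_kn).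
by rewrite -subr_gt0 pwinS_subSS // divr_gt0 // mulr_gt0 ?ltr0n ?subr_gt0.
Qed.

End Unimodality.

Section Value.
Variable R : realType.

Lemma winprob_nwins n r : winprob R n r = (nwins r n [::])%:R / n`!%:R.
Proof.
rewrite /winprob -card_wins; congr (_%:R / _).
by apply: eq_card => s; rewrite !inE; apply/idP/idP; rewrite ?in_setE.
Qed.

Lemma winprob_le_best n r : winprob R n r <= best_pwin R n 0.
Proof.
rewrite winprob_nwins ler_pdivrMr ?ltr0n ?fact_gt0 // mulrC -ntails0.
exact: (nwins_le_best R r (p := [::]) (add0n n)).
Qed.

Lemma winprob_thr n k : (k < n)%N -> winprob R n (thr n k.+1) = pwin R n k.
Proof.
move=> lt_kn; rewrite winprob_nwins (nwins_thr R (p := [::]) lt_kn (add0n n)) /=.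
by rewrite ntails0 max0n mulrC mulrA mulVf ?mul1r // pnatr_eq0 -lt0n fact_gt0.
Qed.

Lemma V_best n : (0 < n)%N -> V R n = best_pwin R n 0.
Proof.
move=> n_gt0; rewrite /V; set E := (X in sup X).
have ub : ubound E (best_pwin R n 0) by move=> _ [r _ <-]; exact: winprob_le_best.
have ne : (E !=set0)%classic by exists (winprob R n (thr n 1)), (thr n 1).
apply/eqP; rewrite eq_le ge_sup //=.
have [k /andP [_ lt_kn] ->] := best_pwin_attained R n_gt0.
rewrite -(winprob_thr lt_kn); apply: ub_le_sup; first by exists (best_pwin R n 0).
by exists (thr n k.+1).
Qed.

End Value.

Theorem theorem5p1 (R : realType) :
  (forall n : nat, (3 <= n)%N -> V R n.+1 < V R n) /\
  (forall n : nat, (3 <= n)%N ->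
     exists! k : nat, (1 <= k <= n)%N /\
       (forall k' : nat, (1 <= k' <= n)%N ->
          winprob R n (thr n k') <= winprob R n (thr n k))).
Proof.
split=> n n_ge3; have n_gt0 : (0 < n)%N by lia.
  rewrite !V_best //; have [k /andP [_ lt_kn1] ->] := best_pwin_attained R (ltn0Sn n).
  exact: pwin_succ_lt_best.
have [k0 /andP [_ lt_k0n] best_k0] := best_pwin_attained R n_gt0.
have k0_max j : (j <= n)%N -> pwin R n j <= pwin R n k0.
  by rewrite -best_k0 => le_jn; apply: pwin_le_best.
exists k0.+1; split.
  split=> [|[|k] //= lt_kn]; first exact: lt_k0n.
  by rewrite !winprob_thr //; apply: k0_max; apply: ltnW.
move=> [|k] [//= lt_kn k_max]; congr _.+1.
apply/esym/(pwin_argmax_unique n_ge3 (ltnW lt_k0n) (ltnW lt_kn) k0_max).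
by apply/eqP; rewrite eq_le k0_max ?(ltnW lt_kn) //= -!winprob_thr // k_max.
Qed.
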